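(* Let $G$ be a simple, undirected, connected graph on $N$ vertices with edge set $E$ and degree sequence $d_1\le d_2\le\cdots\le d_N$. If $d_j=1$ for $1\le j\le M$, where $M<N$, then $$R^+(G)\ge N(N-2)+2|E|\left[M+\frac{(N-M)^2}{2|E|-M}\right]-2|E|.$$
   Context: For vertices $i,j$ of $G$, $R_{ij}$ denotes the effective resistance between $i$ and $j$ when every edge of $G$ is a unit resistor. The additive degree-Kirchhoff index is $R^+(G)=\sum_{i<j}(d_i+d_j)R_{ij}$, where $d_i$ is the degree of vertex $i$. *)

From HB Require Import structures.
From mathcomp Require Import all_boot all_order all_algebra.
Set Implicit Arguments. Unset Strict Implicit. Unset Printing Implicit Defensive.
Import Order.TTheory GRing.Theory Num.Theory.
Local Open Scope ring_scope.

Definition simple_graph N (e : rel 'I_N) : Prop :=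
  irreflexive e /\ symmetric e.

Definition connected_graph N (e : rel 'I_N) : Prop :=
  forall i j : 'I_N, connect e i j.

Definition deg N (e : rel 'I_N) (i : 'I_N) : nat := #|[set j | e i j]|.

Definition edges N (e : rel 'I_N) : {set {set 'I_N}} :=
  [set A : {set 'I_N} | [exists x, exists y, e x y && (A == [set x; y])]].

(* degree sequence sorted non-decreasingly: d_1 <= d_2 <= ... <= d_N
   (0-indexed: entry k is d_{k+1}) *)
Definition degseq N (e : rel 'I_N) : seq nat :=
  sort leq [seq deg e i | i <- enum 'I_N].

Definition laplacian (R : fieldType) N (e : rel 'I_N) : 'M[R]_N :=
  \matrix_(i, j) (if i == j then (deg e i)%:R else if e i j then -1 else 0).

(* Effective resistance between i and j with unit resistors on edges:
   the potential difference w_i - w_j, where w solves the Kirchhoff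
   equation w L = e_i - e_j (unit current in at i, out at j).
   pinvmx gives such a solution whenever one exists (always, for a
   connected graph); the difference w_i - w_j is then independent of
   the chosen solution. *)
Definition eff_res (R : fieldType) N (e : rel 'I_N) (i j : 'I_N) : R :=
  let b : 'rV[R]_N := delta_mx 0 i - delta_mx 0 j in
  let w := b *m pinvmx (laplacian R e) in
  w 0 i - w 0 j.

Definition add_deg_kirchhoff (R : fieldType) N (e : rel 'I_N) : R :=
  \sum_(i < N) \sum_(j < N | (i < j)%N) ((deg e i + deg e j)%:R * eff_res R e i j).

From HB Require Import structures.
From mathcomp Require Import all_boot all_order all_algebra.
From mathcomp Require Import ring lra zify.
Import Order.TTheory GRing.Theory Num.Theory.
Local Open Scope ring_scope.
Set Implicit Arguments. Unset Strict Implicit. Unset Printing Implicit Defensive.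

(* R_ij is the energy w L w^T of the potential w solving w L = e_i - e_j, where L
   is the Laplacian; such a w exists because, for a connected graph, the kernel
   of L consists of the constant vectors.  Cauchy-Schwarz for the positive
   semidefinite form of L against the test potential d_j e_i - d_i e_j gives
   (d_i + d_j) R_ij >= (d_i + d_j) (1/d_i + 1/d_j) - 2 a_ij.  Summing over the
   pairs, R^+ >= N(N-2) + D S - D with D = sum_k d_k = 2|E| and S = sum_k 1/d_k.
   Finally S >= M + (N-M)^2/(D-M): the M leaves contribute 1 each, and 1/x lies
   above its tangent line at the mean (D-M)/(N-M) of the other degrees. *)

Lemma pair_resistance_arith (R : realFieldType) (di dj r : R) (adj : bool) :
  1 <= di -> 1 <= dj ->
  (di + dj) ^+ 2 <= r * (di * dj * (di + dj + 2 * adj%:R)) ->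
  (di + dj) * (di^-1 + dj^-1) - 2 * adj%:R <= (di + dj) * r.
Proof.
move=> di1 dj1 hCS.
have p0 : 0 < di * dj by apply: mulr_gt0; lra.
rewrite -(ler_pM2r p0).
have -> : ((di + dj) * (di^-1 + dj^-1) - 2 * adj%:R) * (di * dj)
    = (di + dj) ^+ 2 - 2 * adj%:R * (di * dj).
  by field; apply/andP; split; apply: lt0r_neq0; lra.
have -> : (di + dj) * r * (di * dj) = (di + dj) * (r * (di * dj)) by ring.
move: hCS; rewrite mulrA.
set s := di + dj; set p := di * dj; set q := r * p.
have s2 : 2 <= s by rewrite /s; lra.
case: adj; rewrite /= ?mulr0 ?mulr1 ?addr0 ?subr0 => hCS; last nra.
have hp : s ^+ 2 <= p * (s + 2) by rewrite /s /p; nra.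
rewrite -(ler_pM2r (_ : 0 < s + 2)); last lra.
nra.
Qed.

Section CauchySchwarz.
Variables (R : realFieldType) (V : lmodType R) (f : V -> V -> R).
Hypothesis fDl : forall u v w, f (u + v) w = f u w + f v w.
Hypothesis fZl : forall a u w, f (a *: u) w = a * f u w.
Hypothesis fC : forall u v, f u v = f v u.
Hypothesis f_ge0 : forall u, 0 <= f u u.

Lemma form_cauchy_schwarz u v : 0 < f v v -> f u v ^+ 2 <= f u u * f v v.
Proof.
move=> v_gt0.
have fDr w u' v' : f w (u' + v') = f w u' + f w v' by rewrite fC fDl !(fC w).
have fZr a w u' : f w (a *: u') = a * f w u' by rewrite fC fZl fC.
have := f_ge0 (f v v *: u + (- f u v) *: v).
rewrite !(fDl, fZl, fDr, fZr) (fC v u).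
set t := f v v; set c := f u v; set r := f u u => h.
have : 0 <= t * (t * r - c ^+ 2) by rewrite expr2; nra.
by rewrite pmulr_rge0 // subr_ge0 mulrC.
Qed.
End CauchySchwarz.

Lemma sum_sym_diag_upper (R : nmodType) N (G : 'I_N -> 'I_N -> R) :
  (forall i j, G i j = G j i) ->
  \sum_i \sum_j G i j = \sum_i G i i + (\sum_(i < N) \sum_(j < N | (i < j)%N) G i j) *+ 2.
Proof.
move=> GC.
have lower_upper :
      \sum_(i < N) \sum_(j < N | (j < i)%N) G i j = \sum_(i < N) \sum_(j < N | (i < j)%N) G i j.
  under eq_bigr do rewrite big_mkcond.
  rewrite exchange_big /=; apply: eq_bigr => i _; rewrite [RHS]big_mkcond.
  by apply: eq_bigr => j _; rewrite GC.
have split_row i : \sum_j G i j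
    = G i i + \sum_(j < N | (j < i)%N) G i j + \sum_(j < N | (i < j)%N) G i j.
  rewrite (bigID (fun j : 'I_N => (i < j)%N)) /= addrC; congr (_ + _).
  rewrite (bigD1 i) ?ltnn //=; congr (_ + _); apply: eq_bigl => j.
  by rewrite -leqNgt ltn_neqAle andbC.
by rewrite (eq_bigr _ (fun i _ => split_row i)) !big_split /= lower_upper mulr2n addrA.
Qed.

Lemma sum_recip_ge (R : realFieldType) (I : finType) (d : I -> R) (M : nat) :
  (forall k, 1 <= d k) -> (M < #|I|)%N -> (M <= #|[pred k | d k == 1%R]|)%N ->
  M%:R + (#|I|%:R - M%:R) ^+ 2 / (\sum_k d k - M%:R) <= \sum_k (d k)^-1.
Proof.
move=> d_ge1 MN M_ones.
set n := #|I|; set D := \sum_k d k.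
have nD : n%:R <= D.
  have : \sum_(k : I) (1 : R) <= D by apply: ler_sum.
  by rewrite sumr_const.
have Mn : M%:R < n%:R :> R by rewrite ltr_nat.
have nM0 : n%:R - M%:R != 0 :> R by rewrite subr_eq0 gt_eqF.
have DM0 : D - M%:R != 0 by rewrite subr_eq0 gt_eqF //; lra.
(* phi x is the gap between 1/x and its tangent line at c, the mean of the
   d k other than the M ones *)
set c := (D - M%:R) / (n%:R - M%:R).
have c_gt0 : 0 < c by apply: divr_gt0; lra.
pose phi x := x^-1 - 2 / c + x / c ^+ 2.
have phi_ge0 x : 0 < x -> 0 <= phi x.
  move=> x_gt0; have -> : phi x = (x - c) ^+ 2 / (x * c ^+ 2).
    by rewrite /phi; field; rewrite !gt_eqF.
  by rewrite divr_ge0 ?sqr_ge0 // mulr_ge0 ?sqr_ge0 //; lra.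
have phi_sum : \sum_k phi (d k) = \sum_k (d k)^-1 - n%:R * (2 / c) + D / c ^+ 2.
  by rewrite /phi big_split sumrB /= sumr_const -mulr_suml [n%:R * _]mulr_natl.
have phi_ones : M%:R * phi 1 <= \sum_k phi (d k).
  rewrite (bigID (fun k => d k == 1)) /=.
  have -> : \sum_(k | d k == 1) phi (d k) = #|[pred k | d k == 1%R]|%:R * phi 1.
    by rewrite (eq_bigr (fun=> phi 1)) => [|k /eqP ->//]; rewrite sumr_const mulr_natl.
  have := phi_ge0 1 ltr01.
  have : 0 <= \sum_(k | d k != 1) phi (d k).
    by apply: sumr_ge0 => k _; apply: phi_ge0; have := d_ge1 k; lra.
  have : M%:R <= #|[pred k | d k == 1%R]|%:R :> R by rewrite ler_nat.
  nra.
have -> : M%:R + (n%:R - M%:R) ^+ 2 / (D - M%:R)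
    = n%:R * (2 / c) - D / c ^+ 2 + M%:R * phi 1.
  by rewrite /phi /c; field; rewrite nM0 DM0.
lra.
Qed.

Lemma const_mx1_neq0 (R : nzRingType) n (i : 'I_n) : (const_mx 1 : 'rV[R]_n) != 0.
Proof. by apply/eqP => /rowP /(_ i); rewrite !mxE; apply/eqP; rewrite oner_eq0. Qed.

Lemma add_deg_kirchhoff_le1 (R : fieldType) N (e : rel 'I_N) :
  (N <= 1)%N -> add_deg_kirchhoff R e = 0.
Proof.
move=> N_le1; rewrite /add_deg_kirchhoff big1 // => i _; rewrite big_pred0 // => j.
by apply/negbTE; rewrite -leqNgt; have := ltn_ord i; have := ltn_ord j; lia.
Qed.

Section Graph.
Variables (R : realFieldType) (N : nat) (e : rel 'I_N).
Hypothesis e_simple : simple_graph e.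

Local Notation L := (laplacian R e).
Local Notation dR i := ((deg e i)%:R : R).

Lemma e_irr i : e i i = false.
Proof. by case: e_simple. Qed.

Lemma e_sym i j : e i j = e j i.
Proof. by case: e_simple => _; apply. Qed.

Lemma deg_sum k : deg e k = (\sum_l e k l)%N.
Proof.
by rewrite /deg -sum1_card big_mkcond /=; apply: eq_bigr => l _; rewrite inE; case: (e k l).
Qed.

Lemma edges_le1 : (N <= 1)%N -> #|edges e| = 0%N.
Proof.
move=> N_le1; apply/eqP; rewrite cards_eq0; apply/eqP/setP => A; rewrite !inE.
apply/existsP => -[x /existsP [y /andP [exy _]]].
have xy : x = y by apply: val_inj => /=; have := ltn_ord x; have := ltn_ord y; lia.
by rewrite xy e_irr in exy.
Qed.

Lemma leaves_card_ge M : (M <= N)%N ->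
  (forall k, (k < M)%N -> nth 0%N (degseq e) k = 1%N) ->
  (M <= #|[pred k | deg e k == 1%N]|)%N.
Proof.
move=> MN first_ones.
have size_degseq : size (degseq e) = N by rewrite size_sort size_map size_enum_ord.
have -> : #|[pred k | deg e k == 1%N]| = count (pred1 1%N) (degseq e).
  rewrite (permP (permEl (perm_sort _ _))) count_map cardE /enum_mem size_filter count_filter.
  by apply: eq_count => k; rewrite /= andbT.
rewrite -(cat_take_drop M (degseq e)) count_cat.
have : all (pred1 1%N) (take M (degseq e)).
  apply/(all_nthP 0%N) => k; rewrite size_takel ?size_degseq // => kM.
  by rewrite nth_take //= first_ones.
by rewrite all_count size_takel ?size_degseq // => /eqP ->; exact: leq_addr.
Qed.

Lemma card_edges : #|edges e| = #|[set p : 'I_N * 'I_N | (p.1 < p.2)%N && e p.1 p.2]|.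
Proof.
set P := [set p | _].
have edgesE : edges e = [set [set p.1; p.2] | p in P].
  apply/setP => A; rewrite inE; apply/idP/imsetP.
    case/existsP => x /existsP [y /andP [exy /eqP ->]].
    case: (ltngtP x y) => [xy|yx|/val_inj xy]; last by rewrite xy e_irr in exy.
      by exists (x, y); rewrite // inE /= xy exy.
    by exists (y, x); [rewrite inE /= yx e_sym exy | rewrite /= setUC].
  case=> p; rewrite inE => /andP [_ ep] ->.
  by apply/existsP; exists p.1; apply/existsP; exists p.2; rewrite ep eqxx.
rewrite edgesE card_in_imset // => -[p1 p2] [q1 q2]; rewrite !inE /=.
move=> /andP [p12 _] /andP [q12 _] pq.
have p1q : p1 \in [set q1; q2] by rewrite -pq set21.
have p2q : p2 \in [set q1; q2] by rewrite -pq set22.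
have q1p : q1 \in [set p1; p2] by rewrite pq set21.
move: p1q p2q q1p; rewrite !inE -!val_eqE /=.
by move=> /orP [] /eqP h1 /orP [] /eqP h2 /orP [] /eqP h3; congr (_, _); apply: val_inj => /=; lia.
Qed.

Lemma handshake : (\sum_k deg e k = 2 * #|edges e|)%N.
Proof.
under eq_bigr do rewrite deg_sum.
rewrite sum_sym_diag_upper => [|k l]; last by rewrite e_sym.
rewrite big1 ?add0r => [|k _]; last by rewrite e_irr.
suff -> : (\sum_(k < N) \sum_(l < N | (k < l)%N) e k l)%N = #|edges e|.
  by rewrite mulr2n mul2n -addnn.
rewrite card_edges -sum1_card pair_big_dep /= big_mkcond [RHS]big_mkcond /=.
by apply: eq_bigr => -[k l] _; rewrite inE /=; case: (k < l)%N; case: (e k l).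
Qed.

Lemma laplacianE i j : L i j = (i == j)%:R * dR i - (e i j)%:R.
Proof.
rewrite mxE; case: eqP => [->|_]; first by rewrite e_irr mul1r subr0.
by case: (e i j); rewrite mul0r sub0r ?oppr0.
Qed.

Lemma laplacian_sym : L^T = L.
Proof.
apply/matrixP => i j; rewrite mxE !laplacianE e_sym.
by case: (eqVneq i j) => [->|_]; rewrite ?mul0r.
Qed.

Definition lap_form (u v : 'rV[R]_N) : R := (u *m L *m v^T) 0 0.

Lemma lap_formDl u v w : lap_form (u + v) w = lap_form u w + lap_form v w.
Proof. by rewrite /lap_form !mulmxDl mxE. Qed.

Lemma lap_formZl a u w : lap_form (a *: u) w = a * lap_form u w.
Proof. by rewrite /lap_form -!scalemxAl mxE. Qed.

Lemma lap_formC u v : lap_form u v = lap_form v u.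
Proof.
rewrite /lap_form.
have -> : (u *m L *m v^T) 0 0 = (u *m L *m v^T)^T 0 0 by rewrite [RHS]mxE.
by rewrite !trmx_mul trmxK laplacian_sym mulmxA.
Qed.

Lemma lap_formDr u v w : lap_form w (u + v) = lap_form w u + lap_form w v.
Proof. by rewrite lap_formC lap_formDl !(lap_formC w). Qed.

Lemma lap_formZr a u w : lap_form w (a *: u) = a * lap_form w u.
Proof. by rewrite lap_formC lap_formZl lap_formC. Qed.

Lemma lap_form_delta i j : lap_form 'e_i 'e_j = L i j.
Proof. by rewrite /lap_form trmx_delta -rowE -colE !mxE. Qed.

Lemma lap_form_entries u v : lap_form u v = \sum_k \sum_l u 0 k * L k l * v 0 l.
Proof.
rewrite /lap_form mxE exchange_big /=; apply: eq_bigr => l _.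
by rewrite !mxE mulr_suml; apply: eq_bigr => k _; rewrite !mxE.
Qed.

Lemma lap_formE u v :
  lap_form u v = \sum_k \sum_l (e k l)%:R * (u 0 k * (v 0 k - v 0 l)).
Proof.
rewrite lap_form_entries; apply: eq_bigr => k _.
under eq_bigr do rewrite laplacianE mulrBr mulrBl.
under [RHS]eq_bigr do rewrite mulrBr mulrBr.
rewrite !sumrB; congr (_ - _); last by apply: eq_bigr => l _; ring.
rewrite (bigD1 k) //= eqxx big1 ?addr0 => [|l /negbTE]; last first.
  by rewrite eq_sym => ->; rewrite mul0r mulr0 mul0r.
by rewrite mul1r deg_sum natr_sum mulr_sumr mulr_suml; apply: eq_bigr => l _; ring.
Qed.

Lemma lap_form_dirichlet u :
  lap_form u u *+ 2 = \sum_k \sum_l (e k l)%:R * (u 0 k - u 0 l) ^+ 2.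
Proof.
have swapped : lap_form u u = \sum_k \sum_l (e k l)%:R * (u 0 l * (u 0 l - u 0 k)).
  rewrite lap_formE exchange_big /=.
  by apply: eq_bigr => k _; apply: eq_bigr => l _; rewrite e_sym.
rewrite mulr2n {1}swapped lap_formE -big_split; apply: eq_bigr => k _.
by rewrite -big_split; apply: eq_bigr => l _ /=; ring.
Qed.

Lemma lap_form_ge0 u : 0 <= lap_form u u.
Proof.
rewrite -(pmulrn_lge0 _ (isT : (0 < 2)%N)) lap_form_dirichlet.
by apply: sumr_ge0 => k _; apply: sumr_ge0 => l _; rewrite mulr_ge0 ?sqr_ge0.
Qed.

Lemma lap_form_eq0_edge u k l : lap_form u u = 0 -> e k l -> u 0 k = u 0 l.
Proof.
move=> u0 ekl.
have term_ge0 k' l' : 0 <= (e k' l')%:R * (u 0 k' - u 0 l') ^+ 2 :> R.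
  by rewrite mulr_ge0 ?sqr_ge0.
have /eqP := lap_form_dirichlet u; rewrite u0 mul0rn eq_sym.
rewrite psumr_eq0 => [/allP/(_ k (mem_index_enum k))|]; last first.
  by move=> k' _; apply: sumr_ge0.
rewrite psumr_eq0 => [/allP/(_ l (mem_index_enum l))|]; last by [].
by rewrite ekl mul1r sqrf_eq0 subr_eq0 => /eqP.
Qed.

Lemma laplacian_row_sums : L *m (const_mx 1 : 'rV[R]_N)^T = 0.
Proof.
apply/matrixP => k c; rewrite [LHS]mxE [RHS]mxE.
under eq_bigr => l _ do rewrite laplacianE !mxE mulr1.
rewrite sumrB (bigD1 k) //= eqxx mul1r big1 ?addr0 ?deg_sum ?natr_sum ?subrr //.
by move=> l /negbTE; rewrite eq_sym => ->; rewrite mul0r.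
Qed.

Section Connected.
Hypothesis e_connected : connected_graph e.

Lemma deg_gt0 : (1 < N)%N -> forall k, (0 < deg e k)%N.
Proof.
move=> N_gt1 k.
have [l lk] : exists l : 'I_N, l != k.
  case: (eqVneq k (Ordinal (ltnW N_gt1))) => [->|k0].
    by exists (Ordinal N_gt1); rewrite -val_eqE.
  by exists (Ordinal (ltnW N_gt1)); rewrite eq_sym.
case/connectP: (e_connected k l) => [[/= _ lk_eq|y p /= /andP[eky _] _]].
  by rewrite lk_eq eqxx in lk.
by rewrite /deg card_gt0; apply/set0Pn; exists y; rewrite inE.
Qed.

Lemma lap_ker_const (u : 'rV[R]_N) : u *m L = 0 -> forall k l, u 0 k = u 0 l.
Proof.
move=> uL0 k l.
have u0 : lap_form u u = 0 by rewrite /lap_form uL0 mul0mx mxE.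
have closed_level : closed e [pred m | u 0 m == u 0 k].
  by move=> x y exy; rewrite !inE (lap_form_eq0_edge u0 exy).
by have := closed_connect closed_level (e_connected k l); rewrite !inE eqxx => /esym/eqP.
Qed.

Lemma rank_laplacian : \rank L = N.-1.
Proof.
have [N0|N_gt0] := posnP N; first by have := rank_leq_row L; lia.
pose i0 := Ordinal N_gt0.
have ker_sub : (kermx L <= (const_mx 1 : 'rV[R]_N))%MS.
  apply/row_subP => r; set v := row r (kermx L).
  have vL0 : v *m L = 0 by rewrite -row_mul mulmx_ker row0.
  apply/sub_rVP; exists (v 0 i0); apply/rowP => k.
  by rewrite [RHS]mxE [X in _ * X]mxE mulr1; exact: lap_ker_const vL0 _ _.
have L_sub : (L <= kermx (const_mx 1 : 'rV[R]_N)^T)%MS.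
  by apply/sub_kermxP; exact: laplacian_row_sums.
have := mxrankS ker_sub; have := mxrankS L_sub.
by rewrite !mxrank_ker mxrank_tr !rank_rV (const_mx1_neq0 R i0) /=; lia.
Qed.

Lemma incidence_sub_laplacian i j : (('e_i - 'e_j : 'rV[R]_N) <= L)%MS.
Proof.
set V := kermx (const_mx 1 : 'rV[R]_N)^T.
have L_sub : (L <= V)%MS by apply/sub_kermxP; exact: laplacian_row_sums.
have b_sub : (('e_i - 'e_j : 'rV[R]_N) <= V)%MS.
  by apply/sub_kermxP; rewrite mulmxBl -!rowE; apply/matrixP => a c; rewrite !mxE subrr.
apply: submx_trans b_sub _; rewrite -(geq_leqif (mxrank_leqif_sup L_sub)).
by rewrite rank_laplacian mxrank_ker mxrank_tr rank_rV (const_mx1_neq0 R i) /= subn1.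
Qed.

Lemma lap_form_potential i j v :
  lap_form (('e_i - 'e_j) *m pinvmx L) v = v 0 i - v 0 j.
Proof.
by rewrite /lap_form mulmxKpV ?incidence_sub_laplacian // mulmxBl -!rowE !mxE.
Qed.

Lemma eff_res_energy i j : eff_res R e i j =
  lap_form (('e_i - 'e_j) *m pinvmx L) (('e_i - 'e_j) *m pinvmx L).
Proof. by rewrite lap_form_potential. Qed.

Lemma eff_res_pair_ge i j : i != j -> (0 < deg e i)%N -> (0 < deg e j)%N ->
  (dR i + dR j) * ((dR i)^-1 + (dR j)^-1) - 2 * (e i j)%:R
    <= (dR i + dR j) * eff_res R e i j.
Proof.
move=> ij di_gt0 dj_gt0.
have di1 : 1 <= dR i by rewrite ler1n.
have dj1 : 1 <= dR j by rewrite ler1n.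
set w := ('e_i - 'e_j : 'rV[R]_N) *m pinvmx L.
(* Cauchy-Schwarz for the Laplacian form against this test potential *)
set x := dR j *: 'e_i + (- dR i) *: ('e_j : 'rV[R]_N).
have wx : lap_form w x = dR i + dR j.
  by rewrite lap_form_potential !mxE !eqxx (negbTE ij) eq_sym (negbTE ij) /=; ring.
have xx : lap_form x x = dR i * dR j * (dR i + dR j + 2 * (e i j)%:R).
  rewrite !(lap_formDl, lap_formZl, lap_formDr, lap_formZr) !lap_form_delta.
  by rewrite !laplacianE !eqxx (negbTE ij) eq_sym (negbTE ij) (e_sym j i) !e_irr /=; ring.
have x_pos : 0 < lap_form x x.
  rewrite xx; apply: mulr_gt0; first by apply: mulr_gt0; lra.
  by have : 0 <= (e i j)%:R :> R by []; lra.
have := form_cauchy_schwarz lap_formDl lap_formZl lap_formC lap_form_ge0 w x_pos.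
by rewrite wx xx -eff_res_energy; apply: pair_resistance_arith.
Qed.

Lemma add_deg_kirchhoff_ge : (1 < N)%N ->
  N%:R * (N%:R - 2) + (\sum_k dR k) * (\sum_k (dR k)^-1) - \sum_k dR k
    <= add_deg_kirchhoff R e.
Proof.
move=> N_gt1; have d_gt0 := deg_gt0 N_gt1.
have dR_neq0 k : dR k != 0 by rewrite pnatr_eq0 -lt0n.
set D := \sum_k dR k; set S := \sum_k (dR k)^-1.
pose H i j := (dR i + dR j) * ((dR i)^-1 + (dR j)^-1) - 2 * (e i j)%:R.
have H_le : \sum_(i < N) \sum_(j < N | (i < j)%N) H i j <= add_deg_kirchhoff R e.
  apply: ler_sum => i _; apply: ler_sum => j ij; rewrite natrD.
  by apply: eff_res_pair_ge; rewrite // -val_eqE /= neq_ltn ij.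
have H_sym i j : H i j = H j i by rewrite /H e_sym [dR j + _]addrC [(dR j)^-1 + _]addrC.
have H_diag : \sum_i H i i = N%:R * 4.
  rewrite (eq_bigr (fun=> 4)) => [|i _]; first by rewrite sumr_const card_ord mulr_natl.
  by rewrite /H e_irr /=; field.
have H_total : \sum_i \sum_j H i j = N%:R ^+ 2 * 2 + D * S * 2 - D * 2.
  have H_expand i j : H i j = 2 + dR i * (dR j)^-1 + dR j * (dR i)^-1 - (e i j)%:R * 2.
    by rewrite /H; field; rewrite !dR_neq0.
  have row i : \sum_j H i j = 2 * N%:R + dR i * S + D * (dR i)^-1 - dR i * 2.
    under eq_bigr do rewrite H_expand.
    rewrite !big_split /= sumr_const card_ord sumrN -mulr_sumr -mulr_suml -mulr_suml.
    by rewrite -/S -/D deg_sum natr_sum mulr_natl mulr2n.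
  rewrite (eq_bigr _ (fun i _ => row i)) !(big_split, sumrB) /= sumr_const card_ord.
  by rewrite sumrN -!mulr_suml -mulr_sumr -/S -/D -mulr_natr; ring.
have := sum_sym_diag_upper H_sym; rewrite H_total H_diag mulr2n.
have -> : N%:R * (N%:R - 2) = N%:R ^+ 2 - N%:R * 2 :> R by ring.
lra.
Qed.

End Connected.
End Graph.

Theorem corollary3 (R : realFieldType) (N M : nat) (e : rel 'I_N) :
  simple_graph e -> connected_graph e ->
  (M < N)%N ->
  (forall k : nat, (k < M)%N -> nth 0%N (degseq e) k = 1%N) ->
  let nE : R := (#|edges e|)%:R in
  add_deg_kirchhoff R e >=
    (N%:R * (N%:R - 2)) + 2 * nE * (M%:R + (N%:R - M%:R) ^+ 2 / (2 * nE - M%:R))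
    - 2 * nE.
Proof.
move=> e_simple e_connected MN first_ones /=; set nE : R := (#|edges e|)%:R.
have [N_le1|N_gt1] := leqP N 1.
  rewrite /nE add_deg_kirchhoff_le1 // edges_le1 //.
  have -> : M = 0%N by lia.
  have -> : N = 1%N by lia.
  lra.
have d_gt0 := deg_gt0 e_connected N_gt1.
have D_eq : \sum_k (deg e k)%:R = 2 * nE :> R by rewrite -natr_sum handshake // natrM.
have leaves : (M <= #|[pred k | (deg e k)%:R == 1%R :> R]|)%N.
  rewrite (eq_card (B := [pred k | deg e k == 1%N])) => [|k]; last by rewrite !inE pnatr_eq1.
  exact: leaves_card_ge (ltnW MN) first_ones.
have d_ge1 k : 1 <= (deg e k)%:R :> R by rewrite ler1n.
have := sum_recip_ge d_ge1 _ leaves; rewrite card_ord D_eq => /(_ MN) S_ge.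
have := add_deg_kirchhoff_ge R e_simple e_connected N_gt1; rewrite D_eq.
have nE_ge0 : 0 <= 2 * nE by rewrite mulr_ge0.
nra.
Qed.
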